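(* Let $\Xi$ be an admissible Gibbs process with activity $\lambda<\lambda_c(d)$. For $p\in\mathbb{N}$ and disjoint $\Psi_1,\dots,\Psi_p\in\mathcal{B}_b(\mathcal{C}^{(d)})$, \[ \mathbb{E}\Bigl(\prod_{i=1}^p\Xi(\Psi_i)\Bigr)\le\lambda^p\prod_{i=1}^p\mu(\Psi_i). \]
   Context: $\mathcal{C}^{(d)}$: nonempty compact subsets of $\mathbb{R}^d$ with Hausdorff metric $d_H$; $z(K)$ centre of the circumscribed ball of $K$. $\mathbf{N}$: $\mathbb{N}_0\cup\{\infty\}$-valued measures on $\mathcal{C}^{(d)}$ finite on $d_H$-balls; particle processes are random elements of $\mathbf{N}$, assumed simple, stationary, a.s. nonzero. $\mathcal{B}_b(\mathcal{C}^{(d)}):=\{z^{-1}(B):B\subseteq\mathbb{R}^d\text{ bounded Borel}\}$. $\xi^{(m)}$: $m$-th factorial measure. $\mathbb{Q}$: probability measure with $z(K)=\mathbf 0$ and $K\subseteq B(\mathbf 0,R)$ $\mathbb{Q}$-a.s. ($R>0$ fixed); $\mu:=\iint\mathbf 1\{K+x\in\cdot\}\mathbb{Q}(dK)dx$; $\Pi_{\lambda\mu}$ Poisson process with intensity $\lambda\mu$. Admissible Gibbs process: potentials $\varphi_n:(\mathcal{C}^{(d)})^n\to(-\infty,\infty]$, $n\ge2$, measurable, symmetric, translation invariant, zero when $\max_{i<j}d_H(K_i,K_j)>R_\varphi$; $\kappa(K,\xi)=0$ if $K\in\operatorname{supp}\xi$, else $\kappa(K,\xi)=\exp[-\sum_{n\ge2}\frac1{(n-1)!}\int\varphi_n(K,L_1,\ldots,L_{n-1})\xi^{(n-1)}(d(L_1,\ldots,L_{n-1}))]$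 (series set to $0$ if its negative part diverges, assumed not to happen), $\kappa\le1$; $\Xi$ satisfies $\mathbb{E}\int f(K,\Xi-\delta_K)\Xi(dK)=\lambda\mathbb{E}\int f(K,\Xi)\kappa(K,\Xi)\mu(dK)$ for all measurable $f\ge0$. $\lambda_c(d)$: critical intensity for percolation of $\Pi_{\lambda\mu}$ (infinite component of the graph on the support with edges between intersecting particles). *)

From HB Require Import structures.
From mathcomp Require Import all_boot all_order all_algebra all_fingroup.
From mathcomp Require Import all_classical all_reals all_analysis.
From mathcomp Require Import measurable_realfun.

Set Implicit Arguments.
Unset Strict Implicit.
Unset Printing Implicit Defensive.

Import Order.TTheory GRing.Theory Num.Theory.
Import numFieldNormedType.Exports.

Local Open Scope classical_set_scope.
Local Open Scope ring_scope.

(* Iterated Lebesgue integral over R^n (= 'rV[R]_n), coordinate by    *)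
(* coordinate (equal to the integral w.r.t. n-dim Lebesgue measure for *)
(* nonnegative measurable integrands, by Tonelli).                      *)
Definition row_cons (R : realType) (n : nat) (t : R) (v : 'rV[R]_n) : 'rV[R]_n.+1 :=
  \row_(i < n.+1) (if unlift ord0 i is Some j then v ord0 j else t).

Fixpoint lebint (R : realType) (n : nat) : ('rV[R]_n -> \bar R) -> \bar R :=
  match n with
  | 0 => fun g => g 0
  | n'.+1 => fun g =>
      (\int[@lebesgue_measure R]_t lebint (fun v : 'rV[R]_n' => g (row_cons t v)))%E
  end.

Section Particles.
Variables (R : realType) (d : nat).

Definition pt := 'rV[R]_d.

Definition enorm (v : pt) : R := Num.sqrt (\sum_(i < d) v ord0 i ^+ 2).

Definition is_cset (A : set pt) := compact A /\ A !=set0.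

Record cset := CSet { cval : set pt; cvalP : is_cset cval }.

HB.instance Definition _ := gen_eqMixin cset.
HB.instance Definition _ := gen_choiceMixin cset.

Lemma is_cset0 : is_cset [set (0 : pt)].
Proof. by split; [exact: compact_set1 | exists 0]. Qed.

HB.instance Definition _ := isPointed.Build cset (CSet is_cset0).

Lemma is_cset_trans (K : cset) (x : pt) : is_cset ((fun y => y + x) @` cval K).
Proof.
case: K => A [cA [a Aa]] /=; split; last by exists (a + x); exists a.
apply: continuous_compact => //; apply: continuous_subspaceT => y.
by apply: continuousD; [exact: cvg_id | exact: cst_continuous].
Qed.

Definition ctrans (K : cset) (x : pt) : cset := CSet (is_cset_trans K x).

Definition dist_to (y : pt) (L : set pt) : R := inf [set enorm (y - l) | l in L].

Definition dH (K L : cset) : R :=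
  Num.max (sup [set dist_to y (cval L) | y in cval K])
          (sup [set dist_to y (cval K) | y in cval L]).

Definition dH_open (U : set cset) : Prop :=
  forall K, U K -> exists2 r : R, 0 < r & forall L, dH K L < r -> U L.

Definition Cm := g_sigma_algebraType dH_open.

Definition crad (A : set pt) (c : pt) : R := sup [set enorm (y - c) | y in A].
Definition zc (K : cset) : pt :=
  xget 0 [set c | forall c', crad (cval K) c <= crad (cval K) c'].

Definition bounded_pt (B : set pt) := exists M : R, forall x, B x -> enorm x <= M.
Definition Bb (Psi : set Cm) :=
  measurable Psi /\ exists B : set pt, bounded_pt B /\ Psi = zc @^-1` B.

(* counting: xi(S) for a simple counting measure xi given by its support *)
Definition ncount (S : set cset) : \bar R :=
  ereal_sup [set (n%:R)%:E | n in
    [set n : nat | exists f : 'I_n -> cset, injective f /\ forall i, S (f i)]].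

Definition lfin (xi : set cset) : Prop :=
  forall (K0 : cset) (r : R), finite_set (xi `&` [set K | dH K0 K <= r]).

Definition count_gen : set (set (set cset)) :=
  [set X | exists (B : set Cm) (A : set (\bar R)), measurable B /\ measurable A /\
     X = (fun xi : set cset => ncount (xi `&` B)) @^-1` A].

Definition Nm := g_sigma_algebraType count_gen.

Definition cfg_trans (xi : set cset) (x : pt) : set cset := [set ctrans K x | K in xi].

Definition cyl (n : nat) : set (set ('I_n -> cset)) :=
  [set X | exists (i : 'I_n) (A : set Cm), measurable A /\ X = [set t | A (t i)]].

Definition Cn (n : nat) := g_sigma_algebraType (@cyl n).

Definition admissible_potential (phi : forall n, ('I_n -> cset) -> \bar R) (Rphi : R) :=
  forall n, (2 <= n)%N ->
    [/\ measurable_fun [set: Cn n] (phi n : Cn n -> \bar R),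
        (forall t, phi n t != -oo%E),
        (forall (s : {perm 'I_n}) t, phi n (t \o s) = phi n t),
        (forall (x : pt) t, phi n (fun i => ctrans (t i) x) = phi n t) &
        (forall t, (exists i j : 'I_n, (i < j)%N /\ Rphi < dH (t i) (t j)) -> phi n t = 0%E)].

Definition ext (m : nat) (K : cset) (L : 'I_m -> cset) : 'I_m.+1 -> cset :=
  fun i => if unlift ord0 i is Some j then L j else K.

(* integral w.r.t. the m-th factorial measure of a simple counting measure *)
Definition fact_int (xi : set cset) (m : nat) (g : ('I_m -> cset) -> \bar R) : \bar R :=
  (\esum_(L in [set L : 'I_m -> cset | injective L /\ forall i, xi (L i)]) g L)%E.

Definition Hpos (phi : forall n, ('I_n -> cset) -> \bar R) (K : cset) (xi : set cset) : \bar R :=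
  (\esum_(m in [set m : nat | (0 < m)%N])
     ((m`!%:R)^-1)%:E * fact_int xi (fun L => maxe (phi m.+1 (ext K L)) 0))%E.
Definition Hneg (phi : forall n, ('I_n -> cset) -> \bar R) (K : cset) (xi : set cset) : \bar R :=
  (\esum_(m in [set m : nat | (0 < m)%N])
     ((m`!%:R)^-1)%:E * fact_int xi (fun L => maxe (- phi m.+1 (ext K L)) 0))%E.

(* the series sum_{n>=2} 1/(n-1)! int phi_n(K, .) dxi^(n-1); set to 0 if its
   negative part diverges *)
Definition Hser (phi : forall n, ('I_n -> cset) -> \bar R) (K : cset) (xi : set cset) : \bar R :=
  if Hneg phi K xi == +oo%E then 0%E else (Hpos phi K xi - Hneg phi K xi)%E.

Definition kappa (phi : forall n, ('I_n -> cset) -> \bar R) (K : cset) (xi : set cset) : \bar R :=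
  if `[< xi K >] then 0%E else expeR (- Hser phi K xi)%E.

Definition meets (K L : cset) := cval K `&` cval L !=set0.
Fixpoint chain (xi : set cset) (K : cset) (s : seq cset) (L : cset) : Prop :=
  match s with
  | [::] => K = L
  | M :: s' => xi M /\ meets K M /\ chain xi M s' L
  end.
Definition percolates (xi : set cset) : Prop :=
  exists K, xi K /\ infinite_set [set L | exists s, chain xi K s L].

(* Poisson process with intensity measure nu (given by its count distributions) *)
Definition poisson_pp (dO : measure_display) (Om : measurableType dO)
    (P : probability Om R) (Pi : Om -> set cset) (nu : set Cm -> \bar R) : Prop :=
  [/\ forall w, lfin (Pi w),
      measurable_fun [set: Om] (Pi : Om -> Nm) &
      forall (k : nat) (B : 'I_k -> set Cm) (n : 'I_k -> nat),
        (forall i, measurable (B i)) -> (forall i, nu (B i) < +oo)%E ->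
        (forall i j, i != j -> B i `&` B j = set0) ->
        P [set w | forall i, ncount (Pi w `&` B i) = (n i)%:R%:E] =
        (\prod_(i < k) (expR (- fine (nu (B i))) * fine (nu (B i)) ^+ n i
                         / (n i)`!%:R)%:E)%E].

Definition lambda_c (mu : set Cm -> \bar R) : \bar R :=
  ereal_sup [set l%:E | l in [set l : R | 0 <= l /\
     forall (dO : measure_display) (Om : measurableType dO) (P : probability Om R)
            (Pi : Om -> set cset),
       poisson_pp P Pi (fun A => l%:E * mu A)%E ->
       P [set w | percolates (Pi w)] = 0%E]].

Definition grain_dist (Q : probability Cm R) (Rg : R) :=
  Q [set K | zc K = 0 /\ forall y, cval K y -> enorm y <= Rg] = 1%E.

Definition intensity_of (Q : probability Cm R) (mu : set Cm -> \bar R) :=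
  forall Psi : set Cm, measurable Psi ->
    mu Psi = lebint (fun x : pt => Q [set K : Cm | Psi (ctrans K x)]).

(* admissible Gibbs process with activity lam, via the GNZ equation *)
Definition admissible_gibbs (dO : measure_display) (Om : measurableType dO)
    (P : probability Om R) (Xi : Om -> set cset) (lam : R)
    (mu : {measure set Cm -> \bar R})
    (phi : forall n, ('I_n -> cset) -> \bar R) (Rphi : R) : Prop :=
  [/\ (forall w, lfin (Xi w)) /\ measurable_fun [set: Om] (Xi : Om -> Nm),
      (forall (x : pt) (A : set Nm), measurable A ->
          P (Xi @^-1` A) = P ((fun w => cfg_trans (Xi w) x) @^-1` A)),
      P [set w | Xi w = set0] = 0%E,
      admissible_potential phi Rphi /\
        (forall K xi, lfin xi -> (kappa phi K xi <= 1)%E) &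
      forall f : (Cm * Nm)%type -> \bar R,
        measurable_fun [set: (Cm * Nm)%type] f -> (forall z, 0 <= f z)%E ->
        (\int[P]_w (\esum_(K in Xi w) f (K, Xi w `\ K)) =
         lam%:E * \int[P]_w \int[mu]_K (f (K, Xi w) * kappa phi K (Xi w)))%E].

End Particles.

From HB Require Import structures.
From mathcomp Require Import all_boot all_order all_algebra all_fingroup.
From mathcomp Require Import all_classical all_reals all_analysis.
From mathcomp Require Import measurable_realfun.
Import Order.TTheory GRing.Theory Num.Theory.
Import numFieldNormedType.Exports.
(** Apply the GNZ equation to [f(K, xi) = 1_{Psi_0}(K) prod_{i>0} xi(Psi_i)].
    Removing a particle of [Psi_0] does not change the counts in the disjoint
    [Psi_i], so the left-hand side dominates [E prod_i Xi(Psi_i)], while the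
    right-hand side is at most [lam mu(Psi_0) E prod_{i>0} Xi(Psi_i)] because
    [kappa <= 1]; induct on [p]. *)

Set Implicit Arguments.
Unset Strict Implicit.
Unset Printing Implicit Defensive.

Local Open Scope classical_set_scope.
Local Open Scope ring_scope.
Local Open Scope ereal_scope.

Lemma ge0_le_integral_nonmeasurable d (T : measurableType d) (R : realType)
    (mu : {measure set T -> \bar R}) (f g : T -> \bar R) :
  (forall x, 0 <= f x) -> (forall x, f x <= g x) ->
  \int[mu]_x f x <= \int[mu]_x g x.
Proof.
move=> f0 fg; have g0 x : 0 <= g x := le_trans (f0 x) (fg x).
rewrite !ge0_integralTE//; apply: ereal_sup_le => _ [h hf <-].
by exists h => // x; exact: le_trans (hf x) (fg x).
Qed.

Lemma emeasurable_prod d (T : measurableType d) (R : realType) (D : set T)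
    (I : Type) (s : seq I) (h : I -> T -> \bar R) :
  (forall i, measurable_fun D (h i)) ->
  measurable_fun D (fun x => \prod_(i <- s) h i x).
Proof.
move=> mh; elim: s => [|i s IHs].
  by under eq_fun do rewrite big_nil; exact: measurable_cst.
by under eq_fun do rewrite big_cons; exact: emeasurable_funM.
Qed.

Lemma mulrn_le_esum_cst (R : realType) (T : choiceType) (A : set T) (c : \bar R)
    n (g : 'I_n -> T) :
  injective g -> (forall i, A (g i)) -> c *+ n <= \esum_(x in A) c.
Proof.
move=> g_inj Ag; apply: esum_ge; exists [set` map g (enum 'I_n)].
  by split; [exact: finite_seq | move=> _ /mapP[i _ ->]; exact: Ag].
rewrite -fsbig_seq; last by rewrite map_inj_uniq ?enum_uniq.
by rewrite big_map big_enum /= sumr_const card_ord.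
Qed.

Section counting.
Variables (R : realType) (d : nat).
Implicit Types A : set (cset R d).

Lemma ncount_ge0 A : 0 <= ncount A.
Proof.
by apply: ereal_sup_ubound; exists 0%N => //; exists (fun=> point); split=> -[].
Qed.

Lemma ncount_gt0 A : 0 < ncount A -> A !=set0.
Proof.
move=> /ereal_sup_gt[_ [[|n] [g [_ Ag]] <-]]; first by rewrite ltxx.
by move=> _; exists (g ord0).
Qed.

Lemma ncount_mule_le_esum A (c : \bar R) : 0 <= c ->
  ncount A * c <= \esum_(x in A) c.
Proof.
move=> c0; have [/ncount_gt0 [K AK]|A0] := ltP 0 (ncount A); last first.
  have -> : ncount A = 0 by apply/eqP; rewrite eq_le A0 ncount_ge0.
  by rewrite mul0e esum_ge0.
case: c c0 => [r r0| _ |//]; last first.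
  have K_inj : injective ((fun=> K) : 'I_1 -> cset R d).
    by move=> i j; rewrite !ord1.
  have := mulrn_le_esum_cst (+oo : \bar R) K_inj (fun=> AK).
  by rewrite leye_eq => /eqP ->; rewrite leey.
rewrite lee_fin le_eqVlt in r0; case/predU1P: r0 => [<-|r0].
  by rewrite mule0 esum_ge0.
rewrite muleC -ereal_sup_pZl//.
apply: ge_ereal_sup => _ [_ [n [g [g_inj Ag]] <-] <-].
by rewrite muleC mule_natl; exact: mulrn_le_esum_cst g_inj Ag.
Qed.

Lemma measurable_ncountI (B : set (Cm R d)) : measurable B ->
  measurable_fun [set: Nm R d] (fun xi : Nm R d => ncount (xi `&` B)).
Proof. by move=> mB _ Y mY; rewrite setTI; apply: sub_sigma_algebra; exists B, Y. Qed.

End counting.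

Section gibbs_moments.
Variables (R : realType) (d : nat) (dO : measure_display) (Om : measurableType dO).
Variables (P : probability Om R) (Xi : Om -> set (cset R d)) (lam : R).
Variables (mu : {measure set Cm R d -> \bar R}) (Rphi : R).
Variable phi : forall n, ('I_n -> cset R d) -> \bar R.
Hypothesis lam_ge0 : (0 <= lam)%R.
Hypothesis gibbs : admissible_gibbs P Xi lam mu phi Rphi.

Lemma gibbs_esum_le (B : set (Cm R d)) (G : Nm R d -> \bar R) :
  measurable B -> measurable_fun [set: Nm R d] G -> (forall xi, 0 <= G xi) ->
  \int[P]_w (\esum_(K in Xi w `&` B) G (Xi w `\ K)) <=
  lam%:E * mu B * \int[P]_w G (Xi w).
Proof.
move: gibbs => [[Xi_lfin mXi] _ _ [_ kappa_le1] gnz] mB mG G0.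
pose f (z : (Cm R d * Nm R d)%type) := (\1_B z.1)%:E * G z.2.
have f0 z : 0 <= f z by rewrite mule_ge0// lee_fin.
have mB1 : measurable_fun [set: Cm R d] (fun K => (\1_B K)%:E : \bar R).
  by apply/measurable_EFinP; exact: measurable_indic.
have mf : measurable_fun [set: (Cm R d * Nm R d)%type] f.
  apply: emeasurable_funM; first exact: measurableT_comp mB1 measurable_fst.
  exact: measurableT_comp mG measurable_snd.
have kappa_ge0 K xi : 0 <= kappa phi K xi.
  by rewrite /kappa; case: ifP => _; [exact: lexx | exact: expeR_ge0].
have -> : \int[P]_w (\esum_(K in Xi w `&` B) G (Xi w `\ K)) =
          \int[P]_w (\esum_(K in Xi w) f (K, Xi w `\ K)).
  apply: eq_integral => w _; rewrite esum_mkcondr; apply: eq_esum => K _.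
  by rewrite /f indicE /=; case: (K \in B); rewrite ?mul1e ?mul0e.
rewrite gnz// -muleA lee_wpmul2l ?lee_fin//.
rewrite -ge0_integralZl//; last exact: measurableT_comp mG mXi.
apply: ge0_le_integral_nonmeasurable => w.
  by apply: integral_ge0 => K _; exact: mule_ge0.
apply: (@le_trans _ _ (\int[mu]_K f (K, Xi w))).
  apply: ge0_le_integral_nonmeasurable => K; first exact: mule_ge0.
  by rewrite -[leRHS]mule1; apply: lee_wpmul2l => //; exact: kappa_le1 (Xi_lfin w).
by rewrite /f /= ge0_integralZr// ?integral_indic ?setIT// => K _; rewrite lee_fin.
Qed.

Lemma gibbs_prod_ncount_le p (Psi : 'I_p -> set (Cm R d)) :
  (forall i, measurable (Psi i)) ->
  (forall i j, i != j -> Psi i `&` Psi j = set0) ->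
  \int[P]_w (\prod_(i < p) ncount (Xi w `&` Psi i)) <=
  (lam ^+ p)%:E * \prod_(i < p) mu (Psi i).
Proof.
elim: p Psi => [|p IHp] Psi mPsi dPsi.
  under eq_integral do rewrite big_ord0.
  by rewrite big_ord0 expr0 mul1e integral_cst// mul1e probability_le1.
pose G (xi : Nm R d) := \prod_(i < p) ncount (xi `&` Psi (lift ord0 i)).
have G0 xi : 0 <= G xi by apply: prode_ge0 => i _; exact: ncount_ge0.
have mG : measurable_fun [set: Nm R d] G.
  by apply: emeasurable_prod => i; exact: measurable_ncountI.
have G_setD1 xi K : Psi ord0 K -> G (xi `\ K) = G xi.
  move=> PK; apply: eq_bigr => i _; congr ncount.
  rewrite setDE setIAC -setDE not_setD1// => -[_ PiK].
  have : (Psi ord0 `&` Psi (lift ord0 i)) K by [].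
  by rewrite dPsi// neq_lift.
apply: (@le_trans _ _ (\int[P]_w (\esum_(K in Xi w `&` Psi ord0) G (Xi w `\ K)))).
  apply: ge0_le_integral_nonmeasurable => w.
    by apply: prode_ge0 => i _; exact: ncount_ge0.
  rewrite big_ord_recl; apply: le_trans (ncount_mule_le_esum _ (G0 _)) _.
  by apply: le_esum => K [_ PK]; rewrite G_setD1.
apply: le_trans (gibbs_esum_le (mPsi ord0) mG G0) _.
apply: le_trans.
  apply: lee_wpmul2l; first by rewrite mule_ge0 ?lee_fin.
  apply: (IHp (fun i => Psi (lift ord0 i))) => [i|i j ij]; first exact: mPsi.
  by apply: dPsi; rewrite (inj_eq (@lift_inj _ ord0)).
by rewrite big_ord_recl exprS EFinM muleACA.
Qed.

End gibbs_moments.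

Local Close Scope ereal_scope.

Theorem lemma3p8 (R : realType) (d : nat) (Rg : R)
  (Q : probability (Cm R d) R) (mu : {measure set (Cm R d) -> \bar R})
  (dO : measure_display) (Om : measurableType dO) (P : probability Om R)
  (Xi : Om -> set (cset R d)) (lam : R)
  (phi : forall n, ('I_n -> cset R d) -> \bar R) (Rphi : R)
  (p : nat) (Psi : 'I_p -> set (Cm R d)) :
  0 < Rg -> grain_dist Q Rg -> intensity_of Q mu ->
  0 < lam -> admissible_gibbs P Xi lam mu phi Rphi ->
  (lam%:E < lambda_c mu)%E ->
  (0 < p)%N ->
  (forall i, Bb (Psi i)) ->
  (forall i j, i != j -> Psi i `&` Psi j = set0) ->
  (\int[P]_w (\prod_(i < p) ncount (Xi w `&` Psi i))
     <= (lam ^+ p)%:E * \prod_(i < p) mu (Psi i))%E.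
Proof.
move=> _ _ _ lam_gt0 gibbs _ _ Psi_Bb Psi_disj.
exact: (gibbs_prod_ncount_le (ltW lam_gt0) gibbs (fun i => (Psi_Bb i).1) Psi_disj).
Qed.
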